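(* Let $n\geq1$. In the monoid $\Sigma_n$ and in the monoid $\mathcal{H}_n^+$, any two elements $x,y$ admit both a common right-multiple and a common left-multiple.
   Context: $\mathcal{H}_n^+$ is the monoid with generators $\rho_1,\dots,\rho_n$ and relations $\rho_1\rho_j\rho_i=\rho_{i+1}\rho_j$ for $1\leq i<j\leq n$. $\Sigma_n$ is the submonoid of the braid group $\mathcal{B}_{n+1}$ (standard Artin generators $\sigma_1,\dots,\sigma_n$) generated by $\sigma_1,\ \sigma_1\sigma_2,\ \dots,\ \sigma_1\sigma_2\cdots\sigma_n$. A common right-multiple of $x,y$ is an element $xa=yb$; a common left-multiple is an element $ax=by$. *)

From mathcomp Require Import all_boot.
Set Implicit Arguments. Unset Strict Implicit. Unset Printing Implicit Defensive.

Inductive cong_gen (A : Type) (R : seq A -> seq A -> Prop) : seq A -> seq A -> Prop :=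
| cg_refl w : cong_gen R w w
| cg_sym u v : cong_gen R u v -> cong_gen R v u
| cg_trans u v w : cong_gen R u v -> cong_gen R v w -> cong_gen R u w
| cg_step p q u v : R u v -> cong_gen R (p ++ u ++ q) (p ++ v ++ q).

Definition Hword (n : nat) (w : seq nat) : Prop := all (fun k => (1 <= k <= n)%N) w.

Inductive Hrel (n : nat) : seq nat -> seq nat -> Prop :=
| Hrel_def i j : (1 <= i)%N -> (i < j)%N -> (j <= n)%N -> Hrel n [:: 1; j; i] [:: i.+1; j].

Definition Heq (n : nat) := cong_gen (Hrel n).

(* ---------- braid group B_{n+1}: generators sigma_1..sigma_n ----------
   a letter (true, i) is sigma_i, (false, i) is sigma_i^{-1}. *)
Definition bletter := (bool * nat)%type.

Inductive Brel (n : nat) : seq bletter -> seq bletter -> Prop :=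
| Brel_inv1 i : (1 <= i <= n)%N -> Brel n [:: (true, i); (false, i)] [::]
| Brel_inv2 i : (1 <= i <= n)%N -> Brel n [:: (false, i); (true, i)] [::]
| Brel_comm i j : (1 <= i <= n)%N -> (1 <= j <= n)%N -> (i.+1 < j)%N ->
    Brel n [:: (true, i); (true, j)] [:: (true, j); (true, i)]
| Brel_braid i : (1 <= i)%N -> (i.+1 <= n)%N ->
    Brel n [:: (true, i); (true, i.+1); (true, i)] [:: (true, i.+1); (true, i); (true, i.+1)].

Definition Beq (n : nat) := cong_gen (Brel n).

Definition delta (k : nat) : seq bletter := map (fun i => (true, i)) (iota 1 k).

Definition Sigma_word (n : nat) (w : seq bletter) : Prop :=
  exists ks : seq nat, all (fun k => (1 <= k <= n)%N) ks /\ w = flatten (map delta ks).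

From mathcomp Require Import all_boot zify.
Set Implicit Arguments. Unset Strict Implicit. Unset Printing Implicit Defensive.

(* A monoid presented by generators and relations has common left and right
   multiples as soon as it contains a central element D that is a left and a
   right multiple of every generator g, with the same cofactor c_g
   (g c_g = D = c_g g): a word x of length m then divides D^m on both sides,
   so D^(|x|+|y|) is a common multiple of x and y.
   In H_n^+ we take D = rho_n^(n+1).  Iterating the defining relation gives
   rho_k rho_n^k rho_i = rho_(i+k) rho_n^k, whence rho_g and
   c_g = rho_n^g rho_(n-g) rho_n^(n-g) (c_n = rho_n^n) satisfy the hypothesis.
   Finally rho_k |-> delta_k = sigma_1 ... sigma_k respects the relations of
   H_n^+ inside B_(n+1) (a braid computation), and Sigma_n is the image of
   this morphism, so common multiples in H_n^+ map to common multiples in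
   Sigma_n. *)

Lemma cg_ctx (A : Type) (R : seq A -> seq A -> Prop) p q u v :
  cong_gen R u v -> cong_gen R (p ++ u ++ q) (p ++ v ++ q).
Proof.
move=> h; elim: h p q => [w|u' v' _ IH|u' v' w' _ IH1 _ IH2|p' q' u' v' H] p q.
- exact: cg_refl.
- exact: cg_sym.
- exact: cg_trans (IH1 p q) (IH2 p q).
- by have := cg_step (p ++ p') (q' ++ q) H; rewrite !catA.
Qed.

Lemma cg_catl (A : Type) (R : seq A -> seq A -> Prop) p u v :
  cong_gen R u v -> cong_gen R (p ++ u) (p ++ v).
Proof. by move=> h; have := cg_ctx p [::] h; rewrite !cats0. Qed.

Lemma cg_catr (A : Type) (R : seq A -> seq A -> Prop) q u v :
  cong_gen R u v -> cong_gen R (u ++ q) (v ++ q).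
Proof. by move=> h; have := cg_ctx [::] q h. Qed.

Lemma cg_rel (A : Type) (R : seq A -> seq A -> Prop) u v :
  R u v -> cong_gen R u v.
Proof. by move=> h; have := cg_step [::] [::] h; rewrite /= !cats0. Qed.

Section CentralMultiple.

Variables (A : Type) (R : seq A -> seq A -> Prop) (gen : pred A) (D : seq A).

Local Notation "u ~ v" := (cong_gen R u v) (at level 70).

Hypothesis D_gen : all gen D.

Hypothesis cofactor : forall g, gen g ->
  exists2 c, all gen c & (g :: c ~ D) /\ (c ++ [:: g] ~ D).

Definition Dpow (m : nat) : seq A := flatten (nseq m D).

Lemma Dpow_add m k : Dpow (m + k) = Dpow m ++ Dpow k.
Proof. by rewrite /Dpow nseqD flatten_cat. Qed.

Lemma Dpow_rcons m : Dpow m.+1 = Dpow m ++ D.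
Proof. by rewrite -addn1 Dpow_add /Dpow /= cats0. Qed.

Lemma Dpow_gen m : all gen (Dpow m).
Proof. by elim: m => //= m IH; rewrite all_cat D_gen. Qed.

(* D is central: g D = g c g = D g. *)
Lemma D_central g : gen g -> g :: D ~ D ++ [:: g].
Proof.
case/cofactor=> c _ [gc cg].
apply: cg_trans (cg_catl [:: g] (cg_sym cg)) _.
by rewrite catA; apply: cg_catr gc.
Qed.

Lemma Dpow_central g m : gen g -> g :: Dpow m ~ Dpow m ++ [:: g].
Proof.
move=> hg; elim: m => [|m IH]; first exact: cg_refl.
have -> : Dpow m.+1 = D ++ Dpow m by [].
apply: cg_trans (cg_catr (Dpow m) (D_central hg)) _.
by rewrite -!catA; apply: cg_catl IH.
Qed.

Lemma left_divisor_Dpow x : all gen x ->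
  exists2 a, all gen a & x ++ a ~ Dpow (size x).
Proof.
elim: x => [|g x IH]; first by exists [::] => //; apply: cg_refl.
case/andP=> hg /IH [a ha xa].
have [c hc [gc _]] := cofactor hg.
exists (a ++ c); first by rewrite all_cat ha hc.
rewrite catA; have -> : (g :: x) ++ a = [:: g] ++ (x ++ a) by [].
apply: cg_trans (cg_catr c (cg_catl [:: g] xa)) _.
apply: cg_trans (cg_catr c (Dpow_central _ hg)) _.
by rewrite -catA Dpow_rcons; apply: cg_catl gc.
Qed.

Lemma right_divisor_Dpow x : all gen x ->
  exists2 a, all gen a & a ++ x ~ Dpow (size x).
Proof.
elim/last_ind: x => [|x g IH]; first by exists [::] => //; apply: cg_refl.
rewrite all_rcons => /andP [hg /IH [a ha ax]].
have [c hc [_ cg]] := cofactor hg.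
exists (c ++ a); first by rewrite all_cat ha hc.
have -> : (c ++ a) ++ rcons x g = c ++ ((a ++ x) ++ [:: g]) by rewrite -cats1 !catA.
apply: cg_trans (cg_catl c (cg_catr [:: g] ax)) _.
apply: cg_trans (cg_catl c (cg_sym (Dpow_central _ hg))) _.
rewrite size_rcons -cat1s catA; exact: cg_catr cg.
Qed.

Lemma common_right_multiple x y : all gen x -> all gen y ->
  exists a b, [/\ all gen a, all gen b & x ++ a ~ y ++ b].
Proof.
move=> /left_divisor_Dpow [a ha xa] /left_divisor_Dpow [b hb yb].
exists (a ++ Dpow (size y)), (b ++ Dpow (size x)).
split; [by rewrite all_cat ha Dpow_gen | by rewrite all_cat hb Dpow_gen |].
rewrite !catA; apply: cg_trans (cg_catr _ xa) _.
rewrite -Dpow_add addnC Dpow_add; exact: cg_sym (cg_catr _ yb).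
Qed.

Lemma common_left_multiple x y : all gen x -> all gen y ->
  exists a b, [/\ all gen a, all gen b & a ++ x ~ b ++ y].
Proof.
move=> /right_divisor_Dpow [a ha ax] /right_divisor_Dpow [b hb by_].
exists (Dpow (size y) ++ a), (Dpow (size x) ++ b).
split; [by rewrite all_cat ha Dpow_gen | by rewrite all_cat hb Dpow_gen |].
rewrite -!catA; apply: cg_trans (cg_catl _ ax) _.
rewrite -Dpow_add addnC Dpow_add; exact: cg_sym (cg_catl _ by_).
Qed.

End CentralMultiple.

Lemma H_shift n k i : 1 <= k -> 1 <= i -> i + k <= n ->
  Heq n (k :: nseq k n ++ [:: i]) ((i + k) :: nseq k n).
Proof.
elim: k i => // k IH i _ hi hik.
case: k IH hik => [_ hik | k IH hik].
  by rewrite addn1; apply: cg_rel; apply: Hrel_def => //; lia.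
have unfold_k : Heq n [:: k.+2; n] [:: 1; n; k.+1].
  by apply: cg_sym; apply: cg_rel; apply: Hrel_def => //; lia.
have fold_ik : Heq n [:: 1; n; i + k.+1] [:: i + k.+2; n].
  by rewrite [i + k.+2]addnS; apply: cg_rel; apply: Hrel_def => //; lia.
apply: cg_trans (cg_catr (nseq k.+1 n ++ [:: i]) unfold_k) _.
apply: cg_trans (cg_catl [:: 1; n] (IH i isT hi _)) _; first lia.
exact: (cg_catr (nseq k.+1 n) fold_ik).
Qed.

(* The cofactor of rho_g in D = rho_n^(n+1). *)
Definition H_cofactor n g : seq nat :=
  if g < n then nseq g n ++ (n - g) :: nseq (n - g) n else nseq n n.

Lemma H_cofactor_word n g : 1 <= n -> Hword n (H_cofactor n g).
Proof.
move=> n1; rewrite /H_cofactor /Hword; case: ifP => hg.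
  by rewrite all_cat /= !all_nseq n1 leqnn /= !orbT /=; apply/andP; split; lia.
by rewrite all_nseq n1 leqnn orbT.
Qed.

Lemma H_cofactor_spec n g : 1 <= g <= n ->
  Heq n (g :: H_cofactor n g) (nseq n.+1 n) /\
  Heq n (H_cofactor n g ++ [:: g]) (nseq n.+1 n).
Proof.
case/andP=> g1 gn; rewrite /H_cofactor; case: ifP => hg; last first.
  have -> : g = n by lia.
  by split; [apply: cg_refl | rewrite -addn1 nseqD; apply: cg_refl].
have ng_pos : 1 <= n - g by rewrite subn_gt0.
have ng_g : n - g + g = n by rewrite subnK // ltnW.
have g_ng : g + (n - g) = n by rewrite addnC.
have right_eq := H_shift g1 ng_pos (eq_leq ng_g).
have left_eq := H_shift ng_pos g1 (eq_leq g_ng).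
rewrite ng_g in right_eq; rewrite g_ng in left_eq.
split.
  have -> : g :: (nseq g n ++ (n - g) :: nseq (n - g) n) =
            (g :: nseq g n ++ [:: n - g]) ++ nseq (n - g) n by rewrite /= -catA.
  apply: cg_trans (cg_catr _ right_eq) _.
  have -> : n.+1 = g.+1 + (n - g) by rewrite addSn g_ng.
  by rewrite nseqD; apply: cg_refl.
rewrite -catA; apply: cg_trans (cg_catl _ left_eq) _.
have -> : n.+1 = g + (n - g).+1 by rewrite addnS g_ng.
by rewrite nseqD; apply: cg_refl.
Qed.

Lemma H_common_multiples n : 1 <= n -> forall x y : seq nat, Hword n x -> Hword n y ->
  (exists a b, Hword n a /\ Hword n b /\ Heq n (x ++ a) (y ++ b)) /\
  (exists a b, Hword n a /\ Hword n b /\ Heq n (a ++ x) (b ++ y)).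
Proof.
move=> n1 x y hx hy.
have D_gen : Hword n (nseq n.+1 n) by rewrite /Hword all_nseq n1 leqnn orbT.
have cof g : 1 <= g <= n -> exists2 c, Hword n c &
    Heq n (g :: c) (nseq n.+1 n) /\ Heq n (c ++ [:: g]) (nseq n.+1 n).
  by move=> hg; exists (H_cofactor n g); [exact: H_cofactor_word | exact: H_cofactor_spec].
split.
  by have [a [b [? ? ?]]] := common_right_multiple D_gen cof hx hy; exists a, b.
by have [a [b [? ? ?]]] := common_left_multiple D_gen cof hx hy; exists a, b.
Qed.

Definition run k l : seq bletter := map (fun i => (true, i)) (iota k l).

Lemma run_cat k l1 l2 : run k (l1 + l2) = run k l1 ++ run (k + l1) l2.
Proof. by rewrite /run iotaD map_cat. Qed.

Lemma run_rcons k l : run k l.+1 = run k l ++ [:: (true, k + l)].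
Proof. by rewrite -addn1 run_cat. Qed.

Lemma run_comm n k l m : 1 <= m <= n -> 1 <= k -> k + l <= n.+1 ->
  ((k + l).+1 <= m) || (m.+2 <= k) ->
  Beq n (run k l ++ [:: (true, m)]) ((true, m) :: run k l).
Proof.
move=> hm; elim: l k => [|l IH] k hk hkl hfar; first exact: cg_refl.
have far_k : Beq n [:: (true, k); (true, m)] [:: (true, m); (true, k)].
  case/orP: hfar => hfar; last by apply: cg_sym; apply: cg_rel; apply: Brel_comm; lia.
  by apply: cg_rel; apply: Brel_comm; lia.
apply: cg_trans (cg_catl [:: (true, k)] (IH k.+1 isT _ _)) _; try lia.
exact: (cg_catr (run k.+1 l) far_k).
Qed.

(* For m < j: sigma_1 ... sigma_j sigma_m = sigma_(m+1) sigma_1 ... sigma_j,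
   by one braid relation at position m. *)
Lemma run_shift n m j : 1 <= m -> m < j -> j <= n ->
  Beq n (run 1 j ++ [:: (true, m)]) ((true, m.+1) :: run 1 j).
Proof.
move=> m1 mj jn.
set P := run 1 (m - 1); set S := run m.+2 (j - m - 1).
have split_run : run 1 j = P ++ [:: (true, m); (true, m.+1)] ++ S.
  have len_j : (m - 1) + (2 + (j - m - 1)) = j by lia.
  have start_m : 1 + (m - 1) = m by lia.
  by rewrite -{1}len_j !run_cat start_m addn2.
have past_S : Beq n (S ++ [:: (true, m)]) ((true, m) :: S).
  by apply: run_comm => //; lia.
have past_P : Beq n (P ++ [:: (true, m.+1)]) ((true, m.+1) :: P).
  by apply: run_comm => //; lia.
have braid : Beq n [:: (true, m); (true, m.+1); (true, m)]
                   [:: (true, m.+1); (true, m); (true, m.+1)].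
  by apply: cg_rel; apply: Brel_braid; lia.
rewrite split_run.
have -> : (P ++ [:: (true, m); (true, m.+1)] ++ S) ++ [:: (true, m)] =
          (P ++ [:: (true, m); (true, m.+1)]) ++ (S ++ [:: (true, m)]) by rewrite !catA.
apply: cg_trans (cg_catl _ past_S) _.
rewrite -catA; apply: cg_trans (cg_ctx P S braid) _.
have -> : P ++ [:: (true, m.+1); (true, m); (true, m.+1)] ++ S =
          (P ++ [:: (true, m.+1)]) ++ [:: (true, m); (true, m.+1)] ++ S by rewrite -catA.
exact: cg_catr past_P.
Qed.

Lemma run_conj n i j : i < j -> j <= n ->
  Beq n (run 1 j ++ run 1 i) (run 2 i ++ run 1 j).
Proof.
move=> ij jn; elim: i ij => [|i IH] ij; first by rewrite cats0; apply: cg_refl.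
rewrite run_rcons catA; apply: cg_trans (cg_catr _ (IH (ltnW ij))) _.
rewrite -catA; apply: cg_trans (cg_catl _ (run_shift _ _ jn)) _; try lia.
by rewrite run_rcons -catA add1n addSn; apply: cg_refl.
Qed.

Definition to_braid (w : seq nat) : seq bletter := flatten (map delta w).

Lemma to_braid_cat u v : to_braid (u ++ v) = to_braid u ++ to_braid v.
Proof. by rewrite /to_braid map_cat flatten_cat. Qed.

Lemma Heq_to_braid n u v : Heq n u v -> Beq n (to_braid u) (to_braid v).
Proof.
elim=> [w|u' v' _ IH|u' v' w' _ IH1 _ IH2|p q u' v' H].
- exact: cg_refl.
- exact: cg_sym.
- exact: cg_trans IH1 IH2.
- rewrite !to_braid_cat; apply: cg_ctx.
  case: H => i j _ ij jn; rewrite /to_braid /= !cats0.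
  exact: (cg_catl [:: (true, 1)] (run_conj ij jn)).
Qed.

(* Sigma_n is the image of H_n^+, so it inherits common multiples. *)
Lemma Sigma_common_multiples n : 1 <= n -> forall x y : seq bletter,
  Sigma_word n x -> Sigma_word n y ->
  (exists a b, Sigma_word n a /\ Sigma_word n b /\ Beq n (x ++ a) (y ++ b)) /\
  (exists a b, Sigma_word n a /\ Sigma_word n b /\ Beq n (a ++ x) (b ++ y)).
Proof.
move=> n1 x y [ks [hks ->]] [ls [hls ->]].
have image w : Hword n w -> Sigma_word n (to_braid w) by exists w.
have [[a [b [ha [hb e]]]] [c [d [hc [hd f]]]]] := H_common_multiples n1 hks hls.
split.
  exists (to_braid a), (to_braid b); split; [exact: image | split; first exact: image].
  by have := Heq_to_braid e; rewrite !to_braid_cat.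
exists (to_braid c), (to_braid d); split; [exact: image | split; first exact: image].
by have := Heq_to_braid f; rewrite !to_braid_cat.
Qed.

Theorem lemma5p4 (n : nat) (hn : (1 <= n)%N) :
  (forall x y : seq bletter, Sigma_word n x -> Sigma_word n y ->
     (exists a b, Sigma_word n a /\ Sigma_word n b /\ Beq n (x ++ a) (y ++ b)) /\
     (exists a b, Sigma_word n a /\ Sigma_word n b /\ Beq n (a ++ x) (b ++ y))) /\
  (forall x y : seq nat, Hword n x -> Hword n y ->
     (exists a b, Hword n a /\ Hword n b /\ Heq n (x ++ a) (y ++ b)) /\
     (exists a b, Hword n a /\ Hword n b /\ Heq n (a ++ x) (b ++ y))).
Proof.
split; [exact: Sigma_common_multiples | exact: H_common_multiples].
Qed.
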